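(* Let $(X,\rho)$ be a symmetric quandle, $Y$ an $(X,\rho)$-set, $A$ an abelian group, and $\theta$ a $2$-cocycle of $C^*_{{\rm Q},\rho}(X,A)_Y$. Let $D$ be a diagram of an unoriented link in $\mathbb{R}^3$, and let $D^+$ be the diagram $D$ equipped with an arbitrary orientation. Then $\Phi_\theta(D)=\Phi^{\rm ori}_\theta(D^+)$ as multi-sets.
   Context: A quandle is a set $X$ with a binary operation $(x,y)\mapsto x^y$ such that $x^x=x$ for all $x$; for all $x,y$ there is a unique $z$ with $z^y=x$ (written $z=x^{y^{-1}}$); and $(x^y)^z=(x^z)^{(y^z)}$ for all $x,y,z$. A good involution of $X$ is a map $\rho:X\to X$ with $\rho\circ\rho={\rm id}$, $\rho(x^y)=\rho(x)^y$ and $x^{\rho(y)}=x^{y^{-1}}$ for all $x,y$; the pair $(X,\rho)$ is a symmetric quandle. Its associated group $G_{(X,\rho)}$ is the group with generators the elements of $X$ and relations $x^y=y^{-1}xy$ and $\rho(x)=x^{-1}$ ($x,y\in X$). An $(X,\rho)$-set is a set $Y$ with a right action of $G_{(X,\rho)}$; for $y\in Y$, $x\in X$ write $y^x$ for the action of (the image of) $x$, and $y^{x_1x_2}=(y^{x_1})^{x_2}$. Since $G_{(X,\rho)}$ is a quotient of the group $G_X=\langle X\mid x^y=y^{-1}xy\rangle$, $Y$ is also a right $G_X$-set. Chain complexes: for $n\ge1$ let $C_n(X)_Y$ be the free abelian group on $Y\times X^n$, $C_0(X)_Y$ the free abelian group on $Y$, and $C_n(X)_Y=0$ for $n<0$,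 with $\partial_n(y,x_1,\dots,x_n)=\sum_{i=1}^n(-1)^i\{(y,x_1,\dots,\widehat{x_i},\dots,x_n)-(y^{x_i},x_1^{x_i},\dots,x_{i-1}^{x_i},\widehat{x_i},x_{i+1},\dots,x_n)\}$ for $n\ge1$ and $\partial_n=0$ otherwise. Let $D^{\rm Q}_n(X)_Y$ be generated by the $(y,x_1,\dots,x_n)$ with $x_i=x_{i+1}$ for some $i$, and $D^\rho_n(X)_Y$ by the elements $(y,x_1,\dots,x_n)+(y^{x_i},x_1^{x_i},\dots,x_{i-1}^{x_i},\rho(x_i),x_{i+1},\dots,x_n)$, $1\le i\le n$. These are subcomplexes; set $C^{\rm Q}_*(X)_Y=C_*(X)_Y/D^{\rm Q}_*(X)_Y$ and $C^{{\rm Q},\rho}_*(X)_Y=C_*(X)_Y/(D^{\rm Q}_*(X)_Y+D^\rho_*(X)_Y)$, and for an abelian group $A$ let $C^*_{\rm Q}(X,A)_Y={\rm Hom}(C^{\rm Q}_*(X)_Y,A)$ and $C^*_{{\rm Q},\rho}(X,A)_Y={\rm Hom}(C^{{\rm Q},\rho}_*(X)_Y,A)$. A cocycle of $C^*_{{\rm Q},\rho}(X,A)_Y$ is, via the quotient map, also a cocycle of $C^*_{\rm Q}(X,A)_Y$. Unoriented colorings: for a link diagram $D\subset\mathbb{R}^2$, the semi-arcs are the arcs obtained by cutting the over-arcs of $D$ at the crossings. Assign to each semi-arc a normal orientation and an element of $X$ such that at each crossing: (i) if the two semi-arcs forming the over-arc are labeled $x_1,x_2$, then $x_1=x_2$ when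 their normal orientations are coherent and $x_1=\rho(x_2)$ otherwise; (ii) if the two under semi-arcs $e_1,e_2$ are labeled $x_1,x_2$ and one of the over semi-arcs, labeled $x_3$, has normal orientation pointing from $e_1$ to $e_2$, then $x_1^{x_3}=x_2$ when the normal orientations of $e_1,e_2$ are coherent and $x_1^{x_3}=\rho(x_2)$ otherwise. A basic inversion reverses the normal orientation of one semi-arc and replaces its label $x$ by $\rho(x)$. An $(X,\rho)$-coloring is an equivalence class of such assignments under basic inversions. An $(X,\rho)_Y$-coloring is an $(X,\rho)$-coloring together with an assignment of elements of $Y$ to the complementary regions of $D$ such that whenever a semi-arc labeled $x$ has normal orientation pointing from a region labeled $y_1$ to a region labeled $y_2$, then $y_1^x=y_2$. Weight of a crossing $v$: choose one of the regions $f$ around $v$, with label $y$; let $e_1$ (under) and $e_2$ (over) be the semi-arcs at $v$ facing $f$, with (after basic inversions) normal orientations $n_1,n_2$ pointing away from $f$ and labels $x_1,x_2$; let $\epsilon=+1$ if $(n_2,n_1)$ is a positive basis of $\mathbb{R}^2$ and $-1$ otherwise; the weight is $\epsilon(y,x_1,x_2)$. Put $c_{D,C}=\sum_v(\text{weight of }v)\in C^{{\rm Q},\rho}_2(X)_Y$ (this is independent of the choices), and $\Phi_\theta(D)=\{\theta(c_{D,C})\mid C\text{ an }(X,\rho)_Y\text{-coloring of }D\}$ as a multi-set. Oriented colorings: for an oriented diagram $D^+$, give each semi-arc the normal orientation such that (orientation vector, normal vector) is a positive basis of $\mathbb{R}^2$. An $X_Y$-coloring of $D^+$ assigns elements of $X$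 to semi-arcs and of $Y$ to regions satisfying conditions (i), (ii) and the region condition above with these fixed normal orientations (so no basic inversions are used). The weight of a crossing and the chain $c_{D^+,C}\in C^{\rm Q}_2(X)_Y$ are defined in the same way, and $\Phi^{\rm ori}_\theta(D^+)=\{\theta(c_{D^+,C})\mid C\text{ an }X_Y\text{-coloring of }D^+\}$ as a multi-set. *)

From HB Require Import structures.
From mathcomp Require Import all_boot all_order all_algebra.
From Stdlib Require Import Relations.Relation_Operators.
Set Implicit Arguments. Unset Strict Implicit. Unset Printing Implicit Defensive.
Import GRing.Theory.
Local Open Scope ring_scope.

Section Algebra.
Variables (X : Type) (qop : X -> X -> X) (rho : X -> X).

(* qop x y  stands for  x^y *)
Definition is_quandle : Prop :=
  [/\ (forall x, qop x x = x),
      (forall x y, exists! z, qop z y = x) &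
      (forall x y z, qop (qop x y) z = qop (qop x z) (qop y z))].

(* x^{rho(y)} = x^{y^{-1}} : i.e. x^{rho(y)} is the unique z with z^y = x *)
Definition is_good_involution : Prop :=
  [/\ (forall x, rho (rho x) = x),
      (forall x y, rho (qop x y) = qop (rho x) y) &
      (forall x y, qop (qop x (rho y)) y = x)].

Variable (Y : Type) (act : Y -> X -> Y).

(* A right action of G_(X,rho) = < X | x^y = y^-1 x y, rho(x) = x^-1 > on Y,
   given by the action  act u x = u^x  of the generators: each generator acts
   bijectively and the defining relations hold. *)
Definition is_XrhoSet : Prop :=
  [/\ (forall x, bijective (fun u => act u x)),
      (forall u x y, act (act u y) (qop x y) = act (act u x) y) &
      (forall u x, act (act u (rho x)) x = u)].

Variable (A : zmodType) (th : Y -> X -> X -> A).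

(* th, viewed as the homomorphism on the free abelian group on Y x X^2, is a
   2-cochain of C^*_{Q,rho}(X,A)_Y (vanishes on D^Q_2 and D^rho_2) and is a
   cocycle (th o d_3 = 0 on the generators of C_3). *)
Definition is_QrhoCocycle2 : Prop :=
  [/\ (forall y x, th y x x = 0),
      (forall y x1 x2, th y x1 x2 + th (act y x1) (rho x1) x2 = 0),
      (forall y x1 x2, th y x1 x2 + th (act y x2) (qop x1 x2) (rho x2) = 0) &
      (forall y x1 x2 x3,
          - (th y x2 x3 - th (act y x1) x2 x3)
          + (th y x1 x3 - th (act y x2) (qop x1 x2) x3)
          - (th y x1 x2 - th (act y x3) (qop x1 x3) (qop x2 x3)) = 0)].
End Algebra.

(* At every crossing the four half-edges ("slots") are numbered 0,1,2,3 in
   counterclockwise order; slots 0 and 2 belong to the over-arc, slots 1 and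
   3 to the under-arc.  Corner c (in 'I_4) is the sector between slot c and
   slot c+1 (mod 4).  Each semi-arc s carries a reference normal direction,
   pointing from region [src s] to region [tgt s]; [sd v k] tells whether at
   slot k of crossing v this reference normal points into corner k (true) or
   into corner k-1 (false).  [reg v c] is the region containing corner c. *)

Definition slot (n : nat) : 'I_4 := inord (n %% 4).
Definition nxt (k : 'I_4) : 'I_4 := inord (k.+1 %% 4).
Definition prv (k : 'I_4) : 'I_4 := inord ((k + 3) %% 4).

Record diagram (S V F : finType) := Diagram {
  src : S -> F;
  tgt : S -> F;
  sa  : V -> 'I_4 -> S;
  sd  : V -> 'I_4 -> bool;
  reg : V -> 'I_4 -> F;
  reg_ok : forall v k,
    if sd v k then reg v k = tgt (sa v k) /\ reg v (prv k) = src (sa v k)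
    else reg v (prv k) = tgt (sa v k) /\ reg v k = src (sa v k) }.

Section Colorings.
Variables (X : Type) (qop : X -> X -> X) (rho : X -> X).
Variables (Y : Type) (act : Y -> X -> Y) (A : zmodType) (th : Y -> X -> X -> A).
Variables (S V F : finType) (D : diagram S V F).

(* A normal orientation assignment m : S -> bool (true = reference normal). *)
(* corner into which the normal at slot k of v points *)
Definition toward (m : S -> bool) v (k : 'I_4) : 'I_4 :=
  if m (sa D v k) == sd D v k then k else prv k.

(* label at slot k after a basic inversion making its normal point away from
   corner c (c adjacent to slot k) *)
Definition away (m : S -> bool) (x : S -> X) v (k c : 'I_4) : X :=
  if toward m v k == c then rho (x (sa D v k)) else x (sa D v k).

Definition coherent_over (m : S -> bool) v : bool :=
  (toward m v (slot 0) == slot 0) == (toward m v (slot 2) == slot 1).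
Definition coherent_under (m : S -> bool) v : bool :=
  (toward m v (slot 1) == slot 1) == (toward m v (slot 3) == slot 2).

Definition cond_i (m : S -> bool) (x : S -> X) v : Prop :=
  if coherent_over m v then x (sa D v (slot 0)) = x (sa D v (slot 2))
  else x (sa D v (slot 0)) = rho (x (sa D v (slot 2))).

(* condition (ii), for each of the two over semi-arcs.  The upper half
   (corners 0,1) contains slot 1, the lower half (corners 2,3) slot 3. *)
Definition cond_ii (m : S -> bool) (x : S -> X) v : Prop :=
  forall b : bool,
    let ko := if b then slot 0 else slot 2 in
    let up := toward m v ko == (if b then slot 0 else slot 1) in
    let k1 := if up then slot 3 else slot 1 in
    let k2 := if up then slot 1 else slot 3 in
    if coherent_under m v
    then qop (x (sa D v k1)) (x (sa D v ko)) = x (sa D v k2)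
    else qop (x (sa D v k1)) (x (sa D v ko)) = rho (x (sa D v k2)).

Definition region_ok (m : S -> bool) (x : S -> X) (r : F -> Y) : Prop :=
  forall s, if m s then act (r (src D s)) (x s) = r (tgt D s)
            else act (r (tgt D s)) (x s) = r (src D s).

(* a representative of an (X,rho)_Y-coloring: normals, arc labels, region labels *)
Definition coloring_rep (C : (S -> bool) * (S -> X) * (F -> Y)) : Prop :=
  let: (m, x, r) := C in
  (forall v, cond_i m x v /\ cond_ii m x v) /\ region_ok m x r.

Definition basic_inversion (C C' : (S -> bool) * (S -> X) * (F -> Y)) : Prop :=
  let: (m, x, r) := C in
  exists s : S,
    C' = ((fun t => if t == s then ~~ m t else m t),
          (fun t => if t == s then rho (x t) else x t), r).

Definition inversion_equiv := clos_refl_sym_trans _ basic_inversion.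

Definition is_orientation (o : S -> bool) : Prop :=
  forall v, coherent_over o v && coherent_under o v.

Definition ori_coloring (o : S -> bool) (C : (S -> X) * (F -> Y)) : Prop :=
  coloring_rep (o, C.1, C.2).

(* contribution theta(eps (y, x1, x2)) of crossing v, computed at corner c *)
Definition weight_at (c : 'I_4) (m : S -> bool) (x : S -> X) (r : F -> Y) v : A :=
  let ko := if odd c then nxt c else c in
  let ku := if odd c then c else nxt c in
  let t := th (r (reg D v c)) (away m x v ku c) (away m x v ko c) in
  if odd c then t else - t.

(* corner of v from which both normals of o point away *)
Definition source_corner (o : S -> bool) v : 'I_4 :=
  let up := toward o v (slot 0) == slot 0 in
  let left := toward o v (slot 1) == slot 1 in
  if up then (if left then slot 3 else slot 2)
  else (if left then slot 0 else slot 1).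

Definition Phi (C : (S -> bool) * (S -> X) * (F -> Y)) : A :=
  let: (m, x, r) := C in \sum_(v : V) weight_at (slot 0) m x r v.

Definition Phi_ori (o : S -> bool) (C : (S -> X) * (F -> Y)) : A :=
  \sum_(v : V) weight_at (source_corner o v) o C.1 C.2 v.

End Colorings.

From HB Require Import structures.
From mathcomp Require Import all_boot all_order all_algebra.
From Stdlib Require Import Relations.Relation_Operators FunctionalExtensionality.
Set Implicit Arguments. Unset Strict Implicit. Unset Printing Implicit Defensive.
Import GRing.Theory.

(* Every representative (m, x, r) of an (X,rho)_Y-coloring can be normalised by
   basic inversions so that its normals are those of the orientation o; the
   normalised labels form an X_Y-coloring of D^+, and two representatives are
   equivalent exactly when they normalise to the same oriented coloring.
   Weights are read off after inverting both normals to point away from the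
   chosen region, so they do not see basic inversions.  It remains to move the
   base region of each crossing from corner 0 to the source corner of o: each
   move across an arc changes the weight by a generator of D^rho_2, on which
   theta vanishes. *)

Notation s0 := (@Ordinal 4 0 isT).
Notation s1 := (@Ordinal 4 1 isT).
Notation s2 := (@Ordinal 4 2 isT).
Notation s3 := (@Ordinal 4 3 isT).

Lemma slot0E : slot 0 = s0. Proof. by apply: val_inj; rewrite /= inordK. Qed.
Lemma slot1E : slot 1 = s1. Proof. by apply: val_inj; rewrite /= inordK. Qed.
Lemma slot2E : slot 2 = s2. Proof. by apply: val_inj; rewrite /= inordK. Qed.
Lemma slot3E : slot 3 = s3. Proof. by apply: val_inj; rewrite /= inordK. Qed.
Lemma prv0E : prv s0 = s3. Proof. by apply: val_inj; rewrite /= inordK. Qed.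
Lemma prv1E : prv s1 = s0. Proof. by apply: val_inj; rewrite /= inordK. Qed.
Lemma prv2E : prv s2 = s1. Proof. by apply: val_inj; rewrite /= inordK. Qed.
Lemma prv3E : prv s3 = s2. Proof. by apply: val_inj; rewrite /= inordK. Qed.
Lemma nxt0E : nxt s0 = s1. Proof. by apply: val_inj; rewrite /= inordK. Qed.
Lemma nxt1E : nxt s1 = s2. Proof. by apply: val_inj; rewrite /= inordK. Qed.
Lemma nxt2E : nxt s2 = s3. Proof. by apply: val_inj; rewrite /= inordK. Qed.
Lemma nxt3E : nxt s3 = s0. Proof. by apply: val_inj; rewrite /= inordK. Qed.

Lemma eq_ord4E :
  ((s0 == s1) = false) * ((s0 == s2) = false) * ((s0 == s3) = false) *
  ((s1 == s0) = false) * ((s1 == s2) = false) * ((s1 == s3) = false) *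
  ((s2 == s0) = false) * ((s2 == s1) = false) * ((s2 == s3) = false) *
  ((s3 == s0) = false) * ((s3 == s1) = false) * ((s3 == s2) = false).
Proof. by []. Qed.

Definition ord4E := (slot0E, slot1E, slot2E, slot3E, prv0E, prv1E, prv2E, prv3E,
  nxt0E, nxt1E, nxt2E, nxt3E, eq_ord4E, eqxx).

Lemma ord4P (c : 'I_4) : [\/ c = s0, c = s1, c = s2 | c = s3].
Proof.
case: c => [[|[|[|[|n]]]] lt_c4] //.
- by apply: Or41; apply: val_inj.
- by apply: Or42; apply: val_inj.
- by apply: Or43; apply: val_inj.
- by apply: Or44; apply: val_inj.
Qed.

Section Orienting.
Local Open Scope ring_scope.
Variables (X : Type) (qop : X -> X -> X) (rho : X -> X).
Variables (Y : Type) (act : Y -> X -> Y) (A : zmodType) (th : Y -> X -> X -> A).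
Variables (S V F : finType) (D : diagram S V F).

Hypotheses (HG : is_good_involution qop rho) (HX : is_XrhoSet qop rho act)
  (HC : is_QrhoCocycle2 qop rho act th).

Lemma rhoK : involutive rho. Proof. by case: HG. Qed.
Lemma rho_qop x y : rho (qop x y) = qop (rho x) y. Proof. by case: HG. Qed.
Lemma qopK x y : qop (qop x y) (rho y) = x.
Proof. by case: HG => _ _ qopVK; rewrite -{1}[y]rhoK qopVK. Qed.
Lemma actK u x : act (act u x) (rho x) = u.
Proof. by case: HX => _ _ actVK; rewrite -{1}[x]rhoK actVK. Qed.

Lemma th_act_rho y x1 x2 : th (act y x1) (rho x1) x2 = - th y x1 x2.
Proof. by case: HC => _ th_rho1 _ _; apply/eqP; rewrite -addr_eq0 addrC th_rho1. Qed.
Lemma th_qop_rho y x1 x2 : th (act y x2) (qop x1 x2) (rho x2) = - th y x1 x2.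
Proof. by case: HC => _ _ th_rho2 _; apply/eqP; rewrite -addr_eq0 addrC th_rho2. Qed.

(* In terms of the bits q_k := (the normal at slot k points into corner k),
   condition (i), resp. condition (ii) for one over semi-arc, at a crossing. *)
Definition cond_i_local (q0 q2 : bool) (l0 l2 : X) : Prop :=
  if q0 == ~~ q2 then l0 = l2 else l0 = rho l2.
Definition cond_ii_local (up cu : bool) (lo l1 l3 : X) : Prop :=
  if up then (if cu then qop l3 lo = l1 else qop l3 lo = rho l1)
  else (if cu then qop l1 lo = l3 else qop l1 lo = rho l3).

Lemma cond_iE m x v : cond_i rho D m x v <->
  cond_i_local (m (sa D v s0) == sd D v s0) (m (sa D v s2) == sd D v s2)
    (x (sa D v s0)) (x (sa D v s2)).
Proof.
rewrite /cond_i /coherent_over /toward /cond_i_local ?ord4E.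
by case: (m (sa D v s0) == sd D v s0); case: (m (sa D v s2) == sd D v s2).
Qed.

Lemma cond_iiE m x v : cond_ii qop rho D m x v <->
  cond_ii_local (m (sa D v s0) == sd D v s0)
      ((m (sa D v s1) == sd D v s1) == ~~ (m (sa D v s3) == sd D v s3))
      (x (sa D v s0)) (x (sa D v s1)) (x (sa D v s3)) /\
  cond_ii_local (~~ (m (sa D v s2) == sd D v s2))
      ((m (sa D v s1) == sd D v s1) == ~~ (m (sa D v s3) == sd D v s3))
      (x (sa D v s2)) (x (sa D v s1)) (x (sa D v s3)).
Proof.
rewrite /cond_ii /coherent_under /toward /cond_ii_local.
split => [H|[H1 H2] b]; [split; [move: (H true) | move: (H false)] |
  case: b; [move: H1 | move: H2]]; rewrite /= ?ord4E;
case: (m (sa D v s0) == sd D v s0); case: (m (sa D v s1) == sd D v s1);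
case: (m (sa D v s2) == sd D v s2); case: (m (sa D v s3) == sd D v s3) => //=.
Qed.

Definition relabel (e : bool) (l : X) : X := if e then l else rho l.

Ltac solve_relabel H := first [ by rewrite ?H ?rhoK | by rewrite -?rho_qop H ?rhoK
  | by rewrite -H qopK | by rewrite -[X in qop X _ = _]rhoK -H rho_qop qopK ].

Lemma cond_i_relabel0 e q0 q2 l0 l2 :
  cond_i_local q0 q2 l0 l2 -> cond_i_local (e == q0) q2 (relabel e l0) l2.
Proof. by case: e; rewrite /cond_i_local; case: q0; case: q2 => //= ->; rewrite ?rhoK. Qed.

Lemma cond_i_relabel2 e q0 q2 l0 l2 :
  cond_i_local q0 q2 l0 l2 -> cond_i_local q0 (e == q2) l0 (relabel e l2).
Proof. by case: e; rewrite /cond_i_local; case: q0; case: q2 => //= ->; rewrite ?rhoK. Qed.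

Lemma cond_ii_relabel_over e up cu lo l1 l3 :
  cond_ii_local up cu lo l1 l3 -> cond_ii_local (e == up) cu (relabel e lo) l1 l3.
Proof. by case: e; rewrite /cond_ii_local; case: up; case: cu => //= H; solve_relabel H. Qed.

Lemma cond_ii_relabel1 e up q1 q3 lo l1 l3 :
  cond_ii_local up (q1 == ~~ q3) lo l1 l3 ->
  cond_ii_local up ((e == q1) == ~~ q3) lo (relabel e l1) l3.
Proof.
by case: e; rewrite /cond_ii_local; case: up; case: q1; case: q3 => //= H; solve_relabel H.
Qed.

Lemma cond_ii_relabel3 e up q1 q3 lo l1 l3 :
  cond_ii_local up (q1 == ~~ q3) lo l1 l3 ->
  cond_ii_local up (q1 == ~~ (e == q3)) lo l1 (relabel e l3).
Proof.
by case: e; rewrite /cond_ii_local; case: up; case: q1; case: q3 => //= H; solve_relabel H.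
Qed.

Lemma cond_local_relabel e0 e1 e2 e3 q0 q1 q2 q3 l0 l1 l2 l3 :
  cond_i_local q0 q2 l0 l2 /\
    (cond_ii_local q0 (q1 == ~~ q3) l0 l1 l3 /\
     cond_ii_local (~~ q2) (q1 == ~~ q3) l2 l1 l3) ->
  let q'1 := e1 == q1 in let q'3 := e3 == q3 in
  let l'1 := relabel e1 l1 in let l'3 := relabel e3 l3 in
  cond_i_local (e0 == q0) (e2 == q2) (relabel e0 l0) (relabel e2 l2) /\
    (cond_ii_local (e0 == q0) (q'1 == ~~ q'3) (relabel e0 l0) l'1 l'3 /\
     cond_ii_local (~~ (e2 == q2)) (q'1 == ~~ q'3) (relabel e2 l2) l'1 l'3).
Proof.
move=> [Hi [Hup Hdown]]; split; [|split].
- exact/cond_i_relabel0/cond_i_relabel2.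
- exact/cond_ii_relabel_over/cond_ii_relabel1/cond_ii_relabel3.
- have -> : ~~ (e2 == q2) = (e2 == ~~ q2) by case: e2.
  exact/cond_ii_relabel_over/cond_ii_relabel1/cond_ii_relabel3.
Qed.

Definition reorient (o m : S -> bool) (x : S -> X) : S -> X :=
  fun s => relabel (m s == o s) (x s).

Definition orient (o : S -> bool) (C : (S -> bool) * (S -> X) * (F -> Y)) :
    (S -> X) * (F -> Y) :=
  let: (m, x, r) := C in (reorient o m x, r).

Lemma eqb_reorient (m o : S -> bool) s b : (o s == b) = ((m s == o s) == (m s == b)).
Proof. by case: (m s); case: (o s); case: b. Qed.

Lemma cond_reorient m o x v :
  cond_i rho D m x v /\ cond_ii qop rho D m x v ->
  cond_i rho D o (reorient o m x) v /\ cond_ii qop rho D o (reorient o m x) v.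
Proof.
move=> [/cond_iE Hi /cond_iiE Hii].
have [Hi' Hii'] := cond_local_relabel (m (sa D v s0) == o (sa D v s0))
  (m (sa D v s1) == o (sa D v s1)) (m (sa D v s2) == o (sa D v s2))
  (m (sa D v s3) == o (sa D v s3)) (conj Hi Hii).
by split; [apply/cond_iE | apply/cond_iiE]; rewrite !(eqb_reorient m o).
Qed.

Lemma region_ok_reorient m o x r :
  region_ok act D m x r -> region_ok act D o (reorient o m x) r.
Proof.
move=> Hr s; have := Hr s; rewrite /reorient /relabel.
by case: (m s); case: (o s) => //= <-; rewrite actK.
Qed.

Lemma coloring_rep_orient o C : coloring_rep qop rho act D C ->
  ori_coloring qop rho act D o (orient o C).
Proof.
case: C => [[m x] r] [Hv Hr]; split => [v|]; first exact: cond_reorient.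
exact: region_ok_reorient.
Qed.

Lemma away_reorient m o x v k c : (c == k) || (c == prv k) ->
  away rho D m x v k c = away rho D o (reorient o m x) v k c.
Proof.
case: (ord4P k) => ->; case: (ord4P c) => ->; rewrite ?ord4E //= => _;
rewrite /away /toward /reorient /relabel ?ord4E /=;
by case: (m _); case: (o _); case: (sd D v _); rewrite //= ?rhoK.
Qed.

Lemma weight_at_reorient m o x r v c :
  weight_at rho th D c m x r v = weight_at rho th D c o (reorient o m x) r v.
Proof.
rewrite /weight_at; case: (ord4P c) => -> /=;
by rewrite ?ord4E !(@away_reorient m o) // ?ord4E ?eqxx ?orbT.
Qed.

Lemma region_ok_slot m x r v k : region_ok act D m x r ->
  if m (sa D v k) == sd D v k
  then r (reg D v k) = act (r (reg D v (prv k))) (x (sa D v k))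
  else r (reg D v (prv k)) = act (r (reg D v k)) (x (sa D v k)).
Proof.
move=> Hr; have := Hr (sa D v k); have := reg_ok D v k.
by case: (sd D v k) => -[-> ->]; case: (m _).
Qed.

(* Moving the base corner across the under-arc, resp. the over-arc, is an
   instance of [th_act_rho], resp. [th_qop_rho]. *)
Lemma weight_at_source_corner o x r v :
  cond_i rho D o x v -> cond_ii qop rho D o x v -> region_ok act D o x r ->
  coherent_over D o v && coherent_under D o v ->
  weight_at rho th D (slot 0) o x r v = weight_at rho th D (source_corner D o v) o x r v.
Proof.
move=> /cond_iE Hi /cond_iiE Hii Hr.
have R0 := region_ok_slot v s0 Hr; have R1 := region_ok_slot v s1 Hr.
have R3 := region_ok_slot v s3 Hr.
rewrite /coherent_over /coherent_under /source_corner /weight_at /away /toward ?ord4E /=.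
move: Hi Hii R0 R1 R3; rewrite /cond_i_local /cond_ii_local ?ord4E.
case E0: (o (sa D v s0) == sd D v s0); case E1: (o (sa D v s1) == sd D v s1);
case E2: (o (sa D v s2) == sd D v s2); case E3: (o (sa D v s3) == sd D v s3);
rewrite ?ord4E //= ?E0 ?E1 ?E2 ?E3 ?ord4E /=.
- by move=> _ [Hq _] R0 _ _ _; rewrite R0 -Hq th_qop_rho opprK.
- by move=> Heq [Hq _] R0 _ R3 _; rewrite -Heq R0 R3 -Hq rho_qop th_qop_rho th_act_rho opprK.
- by [].
- by move=> Heq _ _ R1 _ _; rewrite -Heq R1 th_act_rho opprK.
Qed.

Lemma Phi_ori_orient o C : is_orientation D o -> coloring_rep qop rho act D C ->
  Phi_ori rho th D o (orient o C) = Phi rho th D C.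
Proof.
case: C => [[m x] r] Ho [Hv Hr]; apply: eq_bigr => v _ /=.
have [Hi Hii] := cond_reorient o (Hv v).
rewrite (weight_at_reorient m o) -weight_at_source_corner //.
exact: region_ok_reorient.
Qed.

Lemma orient_basic_inversion o C C' :
  basic_inversion rho C C' -> orient o C = orient o C'.
Proof.
case: C => [[m x] r] [s ->] /=; congr pair; apply: functional_extensionality => t.
rewrite /reorient /relabel; case: (eqVneq t s) => [->|//].
by case: (m s); case: (o s); rewrite //= rhoK.
Qed.

Lemma orient_inversion_equiv o C C' :
  inversion_equiv rho C C' -> orient o C = orient o C'.
Proof.
by elim=> [? ? /(orient_basic_inversion o) | | ? ? _ -> | ? ? ? _ -> _ ->].
Qed.

Lemma inversion_equiv_flip_seq (L : seq S) (m : S -> bool) (x : S -> X) (r : F -> Y) :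
  uniq L ->
  inversion_equiv rho (m, x, r)
   ((fun t => if t \in L then ~~ m t else m t),
    (fun t => if t \in L then rho (x t) else x t), r).
Proof.
elim: L => [_ | s L IH /andP [sL uL]].
  have -> : (fun t => if t \in [::] then ~~ m t else m t) = m
    by apply: functional_extensionality.
  have -> : (fun t => if t \in [::] then rho (x t) else x t) = x
    by apply: functional_extensionality.
  exact: rst_refl.
apply: rst_trans (IH uL) _; apply: rst_step; exists s.
congr (_, _, _); apply: functional_extensionality => t; rewrite in_cons;
  by case: (eqVneq t s) => [->|] /=; rewrite ?(negbTE sL).
Qed.

(* The two representatives differ by basic inversions at the semi-arcs where
   their normals disagree. *)
Lemma orient_eq_inversion_equiv o C C' :
  orient o C = orient o C' -> inversion_equiv rho C C'.
Proof.
case: C => [[m x] r]; case: C' => [[m' x'] r'] [Ex <-].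
set L := enum [pred t | m t != m' t].
have -> : m' = (fun t => if t \in L then ~~ m t else m t).
  apply: functional_extensionality => t; rewrite mem_enum inE.
  by case: (m t); case: (m' t).
have -> : x' = (fun t => if t \in L then rho (x t) else x t).
  apply: functional_extensionality => t; rewrite mem_enum inE.
  have := congr1 (fun f => f t) Ex; rewrite /reorient /relabel.
  case: (m t); case: (m' t); case: (o t) => //= E;
    first [by rewrite ?E ?rhoK | by rewrite -?E ?rhoK | by apply: (can_inj rhoK); rewrite E].
exact/inversion_equiv_flip_seq/enum_uniq.
Qed.

Lemma orient_surj o C' : ori_coloring qop rho act D o C' ->
  exists2 C, coloring_rep qop rho act D C & orient o C = C'.
Proof.
case: C' => x r Hc; exists (o, x, r) => //=.
by congr pair; apply: functional_extensionality => t; rewrite /reorient eqxx.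
Qed.

End Orienting.

Theorem theorem6p7 (X : Type) (qop : X -> X -> X) (rho : X -> X)
    (Y : Type) (act : Y -> X -> Y) (A : zmodType) (th : Y -> X -> X -> A)
    (S V F : finType) (D : diagram S V F) (o : S -> bool) :
  is_quandle qop -> is_good_involution qop rho ->
  is_XrhoSet qop rho act -> is_QrhoCocycle2 qop rho act th ->
  is_orientation D o ->
  exists Fm : (S -> bool) * (S -> X) * (F -> Y) -> (S -> X) * (F -> Y),
    [/\ (forall C, coloring_rep qop rho act D C ->
           ori_coloring qop rho act D o (Fm C) /\
           Phi_ori rho th D o (Fm C) = Phi rho th D C),
        (forall C C', coloring_rep qop rho act D C -> coloring_rep qop rho act D C' ->
           (Fm C = Fm C' <-> inversion_equiv rho C C')) &
        (forall C', ori_coloring qop rho act D o C' ->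
           exists2 C, coloring_rep qop rho act D C & Fm C = C')].
Proof.
move=> _ HG HX HC Ho; exists (orient rho o); split.
- move=> C HCrep; split; first exact: (coloring_rep_orient HG HX).
  exact: (Phi_ori_orient HG HX HC).
- move=> C C' _ _; split; first exact: (orient_eq_inversion_equiv HG).
  exact: (orient_inversion_equiv HG).
- exact: orient_surj.
Qed.
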